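(* There exist constants $0<a_n\le A_n$ depending only on $n$ such that the following holds. Let $\alpha\in(0,1)$, $0<\epsilon<\min(\alpha,1-\alpha)$, $Q=[0,1]^n$, and let $\Lambda\subset\mathbb{R}^n$ be a convex set with $Q\subseteq\Lambda\subseteq n^{3/2}Q$. Let $E\subset\mathbb{R}^n$ be a measurable set of finite measure with $\frac{1}{|\Lambda|}\int_\Lambda\chi_E=\alpha$. Then there exists a cube $R\subseteq\Lambda$ with sides parallel to the axes and $a_n\epsilon^n\le|R|\le A_n\epsilon^n$ such that \[ \frac{\alpha-\epsilon}{1-\epsilon}\le\frac{1}{|R|}\int_R\chi_E\le\frac{\alpha}{1-\epsilon}. \]
   Context: $cQ$ denotes the dilate of $Q$ by factor $c$ about its center. *)

From HB Require Import structures.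
From mathcomp Require Import all_boot all_order all_algebra.
From mathcomp Require Import all_classical all_reals all_analysis.
Set Implicit Arguments. Unset Strict Implicit. Unset Printing Implicit Defensive.
Import Order.TTheory GRing.Theory Num.Theory.
Import numFieldNormedType.Exports.
Local Open Scope classical_set_scope.
Local Open Scope ring_scope.

(* Points of R^n are row vectors 'rV[R]_n; the i-th coordinate of x is x ord0 i. *)

Section Lebesgue_n.
Variables (R : realType) (n : nat).

Definition box (a b : 'rV[R]_n) : set 'rV[R]_n :=
  [set x | forall i : 'I_n, a ord0 i <= x ord0 i <= b ord0 i].

Definition box_vol (a b : 'rV[R]_n) : R :=
  \prod_(i < n) Num.max (b ord0 i - a ord0 i) 0.

Definition lebn (A : set 'rV[R]_n) : \bar R :=
  ereal_inf [set v : \bar R | exists a b : nat -> 'rV[R]_n,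
              A `<=` \bigcup_k box (a k) (b k) /\
              v = (\sum_(k <oo) (box_vol (a k) (b k))%:E)%E].

Definition lebn_measurable (E : set 'rV[R]_n) : Prop :=
  forall A : set 'rV[R]_n, lebn A = (lebn (A `&` E) + lebn (A `\` E))%E.

(* (1/|S|) \int_S chi_E  =  |E cap S| / |S|  (used for bounded S). *)
Definition avg_char (E S : set 'rV[R]_n) : R :=
  fine (lebn (E `&` S)) / fine (lebn S).

Definition unit_cube : set 'rV[R]_n := [set x | forall i : 'I_n, 0 <= x ord0 i <= 1].

(* c Q : the dilate of Q = [0,1]^n by factor c about its center (1/2,...,1/2). *)
Definition dilate_unit_cube (c : R) : set 'rV[R]_n :=
  [set x | forall i : 'I_n, 2^-1 - c / 2 <= x ord0 i <= 2^-1 + c / 2].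

Definition axis_cube (p : 'rV[R]_n) (s : R) : set 'rV[R]_n :=
  [set x | forall i : 'I_n, p ord0 i <= x ord0 i <= p ord0 i + s].

End Lebesgue_n.

From HB Require Import structures.
From mathcomp Require Import all_boot all_order all_algebra.
From mathcomp Require Import all_classical all_reals all_analysis.
From mathcomp Require Import ring lra.
Set Implicit Arguments. Unset Strict Implicit. Unset Printing Implicit Defensive.
Import Order.TTheory GRing.Theory Num.Theory.
Import numFieldNormedType.Exports.
Local Open Scope classical_set_scope.
Local Open Scope ring_scope.

(* Let s = eps / (4 n).  The half-open cells of the grid of mesh s whose closed
   cubes lie in the convex set Lam cover the image of Lam under the homothety of
   ratio 1 - 2 s about the centre of Q, hence all of Lam but a fraction eps / 2 of
   it.  Averaging over these cells gives a cube of side s where E has density at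
   least (alpha - eps) / (1 - eps), and, applied to the complement of E, one where
   it has density at most alpha / (1 - eps).  Sliding the first cube to the second
   in small steps keeps it inside Lam by convexity and changes |E cap cube| by less
   than the gap between the two bounds at each step, so one of the intermediate
   cubes has density in between.  A cube of side s has measure s^n |Q|, whence
   a_n = A_n = |Q| / (4 n)^n; that |Q| > 0 is read off the hypotheses rather than
   computed. *)

Lemma bernoulli_ineq (R : realDomainType) (e : R) k :
  0 <= e <= 1 -> 1 - k%:R * e <= (1 - e) ^+ k.
Proof.
move=> /andP[e0 e1]; elim: k => [|k IH]; first by rewrite mul0r subr0 expr0.
have h1 : (1 - e) * (1 - k%:R * e) <= (1 - e) * (1 - e) ^+ k by rewrite ler_wpM2l // subr_ge0.
have h2 : 0 <= k%:R * e * e by rewrite !mulr_ge0.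
rewrite exprS -natr1; nra.
Qed.

Lemma exprM_le_of_lt (R : realFieldType) k (s c r : R) : 0 < s -> 0 <= c ->
  (forall t, 0 < t < s -> t ^+ k * c <= r) -> s ^+ k * c <= r.
Proof.
move=> s0 c0 H; apply/ler_addgt0Pr => e e0.
set A := s ^+ k * c * k%:R.
have A0 : 0 <= A by rewrite !mulr_ge0 // exprn_ge0 // ltW.
set eta := Num.min (2^-1) (e / (A + 1)).
have eta0 : 0 < eta by rewrite lt_min invr_gt0 ltr0n /= divr_gt0 //; lra.
have eta1 : eta <= 2^-1 by rewrite ge_min lexx.
have Ae : A * eta <= e.
  have : A * eta <= A * (e / (A + 1)) by rewrite ler_wpM2l // ge_min lexx orbT.
  by move/le_trans; apply; rewrite mulrA ler_pdivrMr; nra.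
have /H : 0 < s * (1 - eta) < s by apply/andP; split; nra.
rewrite exprMn -mulrA => Ht.
have := @bernoulli_ineq _ eta k (ltac:(apply/andP; split; lra)).
move/(ler_wpM2l (mulr_ge0 (exprn_ge0 k (ltW s0)) c0)).
have -> : s ^+ k * c * (1 - k%:R * eta) = s ^+ k * c - A * eta by rewrite /A; ring.
have -> : s ^+ k * c * (1 - eta) ^+ k = s ^+ k * ((1 - eta) ^+ k * c) by ring.
lra.
Qed.

Lemma exprD_subr_le (R : realDomainType) (s x : R) k : 0 <= s -> 0 <= x <= 1 ->
  (s + x) ^+ k - s ^+ k <= k%:R * x * (s + 1) ^+ k.
Proof.
move=> s0 /andP[x0 x1]; elim: k => [|k IH]; first by rewrite subrr !mul0r.
have a0 : 0 <= s ^+ k by rewrite exprn_ge0.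
have a1 : s ^+ k <= (s + 1) ^+ k by rewrite lerXn2r ?nnegrE //; lra.
have H1 : (s + x) * ((s + x) ^+ k - s ^+ k) <= (s + 1) * (k%:R * x * (s + 1) ^+ k).
  apply: ler_pM => //; [lra | | lra].
  by rewrite subr_ge0 lerXn2r ?nnegrE //; lra.
have H2 : x * s ^+ k <= x * (s + 1) ^+ k by rewrite ler_wpM2l.
have H3 : 0 <= x * (s + 1) ^+ k * s by rewrite !mulr_ge0 // exprn_ge0 //; lra.
have -> : (s + x) ^+ k.+1 - s ^+ k.+1 = (s + x) * ((s + x) ^+ k - s ^+ k) + x * s ^+ k.
  by rewrite !exprS; ring.
rewrite exprS -natr1; nra.
Qed.

Lemma discrete_intermediate_value (R : realDomainType) (f : nat -> R) N (lo hi : R) :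
  lo <= f 0%N -> f N <= hi -> lo <= hi ->
  (forall k, (k < N)%N -> f k - f k.+1 <= hi - lo) ->
  exists2 k, (k <= N)%N & lo <= f k <= hi.
Proof.
move=> f0 fN lohi step.
suff : forall k, (k <= N)%N -> (exists2 j, (j <= N)%N & lo <= f j <= hi) \/ hi < f k.
  by move/(_ N (leqnn N)) => [//|]; rewrite ltNge fN.
elim=> [|k IH] kN.
  by case: (leP (f 0%N) hi) => h; [left; exists 0%N; rewrite ?f0 ?h|right].
case: (IH (ltnW kN)) => [|hk]; first by left.
case: (leP (f k.+1) hi) => h; last by right.
by left; exists k.+1 => //; rewrite h andbT; have := step k kN; lra.
Qed.

Lemma maxr_subr_split (R : realDomainType) (a b h : R) :
  Num.max (Num.min b h - a) 0 + Num.max (b - Num.max a h) 0 = Num.max (b - a) 0.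
Proof.
rewrite /Num.max /Num.min.
by case: (ltP b h) => ?; case: (ltP a h) => ? /=; repeat case: ltP => ?; lra.
Qed.

Lemma density_gain (R : realFieldType) (beta eps T g x : R) :
  0 < eps < beta -> beta < 1 -> 0 < T -> (1 - eps / 2) * T <= g ->
  beta * T <= x + (T - g) -> (beta - eps) / (1 - eps) * g < x.
Proof.
move=> /andP[e0 eb] b1 T0 gT key; set L := (beta - eps) / (1 - eps).
have L1 : L * (1 - eps) = beta - eps by rewrite /L divfK // gt_eqF // subr_gt0; lra.
have L1' : L < 1 by rewrite /L ltr_pdivrMr; lra.
have h1 : 0 <= (1 - L) * (g - (1 - eps / 2) * T) by rewrite mulr_ge0 //; lra.
have h2 : 0 < (1 - L) * eps * T by rewrite !mulr_gt0 //; lra.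
have h3 : L * eps * T = (L - beta + eps) * T by rewrite -[beta](subrK eps) -L1; ring.
lra.
Qed.

Section lebn_outer_measure.
Variables (R : realType) (n : nat).
Local Notation V := 'rV[R]_n.
Local Notation m := (@lebn R n).

Definition boxp_vol (p : V * V) : \bar R := (box_vol p.1 p.2)%:E.

Definition box_cover (A : set V) (c : nat -> V * V) :=
  A `<=` \bigcup_k box (c k).1 (c k).2.

Lemma lebnE A :
  m A = ereal_inf [set (\sum_(k <oo) boxp_vol (c k))%E | c in box_cover A].
Proof.
rewrite /lebn; congr ereal_inf; apply/seteqP; split => x.
  by move=> [a [b [Ac ->]]]; exists (fun k => (a k, b k)).
by move=> [c Ac <-]; exists (fun k => (c k).1), (fun k => (c k).2).
Qed.

Lemma box_vol_ge0 (a b : V) : 0 <= box_vol a b.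
Proof. by apply: prodr_ge0 => i _; rewrite le_max lexx orbT. Qed.

Lemma boxp_vol_ge0 p : (0 <= boxp_vol p)%E.
Proof. by rewrite lee_fin box_vol_ge0. Qed.

Local Open Scope ereal_scope.

Lemma lebn_ge0 A : 0 <= m A.
Proof.
apply: le_ereal_inf_tmp => _ [a [b [_ ->]]].
by apply: nneseries_ge0 => k _ _; rewrite lee_fin box_vol_ge0.
Qed.

Lemma le_lebn : {homo m : A B / A `<=` B >-> A <= B}.
Proof.
move=> A B AB; apply: ereal_inf_le_tmp => _ [a [b [Bab ->]]].
by exists a, b; split => //; exact: subset_trans Bab.
Qed.

Lemma lebn_fineK A (y : R) : m A <= y%:E -> m A = (fine (m A))%:E.
Proof. by move=> Ay; rewrite fineK // ge0_fin_numE ?lebn_ge0 // (le_lt_trans Ay) ?ltry. Qed.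

Lemma lebn_cover_approx A (e : R) : m A < +oo -> (0 < e)%R ->
  exists2 c, box_cover A c & \sum_(k <oo) boxp_vol (c k) <= m A + e%:E.
Proof.
move=> Afin e0; have mA : m A \is a fin_num by rewrite ge0_fin_numE ?lebn_ge0.
move: mA; rewrite lebnE => /(lb_ereal_inf_adherent e0)[_ [c Ac <-] ce].
by exists c => //; exact: ltW.
Qed.

Lemma lebn_bigcup_le (A : nat -> set V) (G : nat -> nat -> V * V) :
  (forall i, box_cover (A i) (G i)) ->
  m (\bigcup_i A i) <= \sum_(i <oo) \sum_(j <oo) boxp_vol (G i j).
Proof.
move=> AG; have G0 x : 0 <= (boxp_vol \o uncurry G) x by exact: boxp_vol_ge0.
have <- : \esum_(i in setT) (boxp_vol \o uncurry G) i =
    \sum_(i <oo) \sum_(j <oo) boxp_vol (G i j); last first.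
  rewrite lebnE; apply: ereal_inf_lbound => /=.
  have /card_esym/ppcard_eqP[f] := card_nat2.
  exists (uncurry G \o f).
    move=> t [i _ /AG[j _ Gt]]; exists (f^-1%FUN (i, j)) => //=.
    by rewrite invK ?inE.
  rewrite -(esum_pred_image (boxp_vol \o uncurry G) _ xpredT) ?[fun=> _]set_true//.
  by rewrite image_eq.
pose J i : set (nat * nat) := [set (i, j) | j in setT].
rewrite (_ : setT = \bigcup_i J i); last first.
  by rewrite predeqE => -[a b]; split => // _; exists a => //; exists b.
rewrite esum_bigcupT /=; last 2 first.
- apply/trivIsetP => i j _ _ ij.
  rewrite predeqE => -[k l] /=; split => //= -[] [_] _ [<-{k} _].
  by move=> [m' _] [] /esym/eqP; rewrite (negbTE ij).
- by move=> /= [k l]; exact: boxp_vol_ge0.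
rewrite -(image_id [set: nat]) -fun_true esum_pred_image//; last first.
  by move=> *; apply: esum_ge0 => *; exact: boxp_vol_ge0.
apply: eq_eseriesr => /= i _.
rewrite -(esum_pred_image (boxp_vol \o uncurry G) (pair i) predT)//=; last first.
  by move=> ? ? _ _; exact: (@can_inj _ _ _ snd).
  by move=> *; exact: boxp_vol_ge0.
by congr esum; rewrite predeqE => -[a b]; split; move=> [j _ <-]; exists j.
Qed.

Lemma lebn_sigma_subadditive : sigma_subadditive m.
Proof.
move=> A; have [[i ioo]|] := pselect (exists i, m (A i) = +oo).
  rewrite (eseries_pinfty _ _ ioo) ?leey// => k _.
  by rewrite -ltNye (lt_le_trans _ (lebn_ge0 _)).
rewrite -forallNE => Afin; apply/lee_addgt0Pr => e e0.
rewrite (le_trans _ (epsilon_trick _ _ _)) ?(ltW e0)//; last first.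
  by move=> k; exact: lebn_ge0.
pose P i c := box_cover (A i) c /\
  \sum_(j <oo) boxp_vol (c j) <= m (A i) + (e / (2 ^ i.+1)%:R)%:E.
have [G AG] : {G : nat -> nat -> V * V & forall i, P i (G i)}.
  apply: (@choice _ _ P) => i.
  have ei : (0 < e / (2 ^ i.+1)%:R)%R by rewrite divr_gt0 // ltr0n expn_gt0.
  have Aifin : m (A i) < +oo by rewrite ltey; exact/eqP/Afin.
  by have [c Ac ce] := lebn_cover_approx Aifin ei; exists c.
apply: le_trans (lebn_bigcup_le (fun i => (AG i).1)) _; apply: lee_lim.
- by apply: is_cvg_nneseries => i *; apply: nneseries_ge0 => *; exact: boxp_vol_ge0.
- apply: is_cvg_nneseries => i *; apply: adde_ge0; first exact: lebn_ge0.
  by rewrite lee_fin divr_ge0 // ltW.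
- by near=> k; apply: lee_sum => i _; exact: (AG i).2.
Unshelve. all: by end_near. Qed.

End lebn_outer_measure.

Section caratheodory_finite.
Variables (R : realType) (T : Type) (mu : {outer_measure set T -> \bar R}).
Local Notation M := mu.-caratheodory.
Local Open Scope ereal_scope.

Lemma caratheodory_forall (I : finType) (P : I -> set T) :
  (forall i, M (P i)) -> M [set x | forall i, P i x].
Proof.
move=> MP; have -> : [set x | forall i, P i x] = \big[setI/setT]_(i <- enum I) P i.
  rewrite -bigcap_seq; apply/seteqP; split=> [x Px i _|x Px i]; first exact: Px.
  by apply: Px; rewrite /= mem_enum.
elim/big_ind: _ => //; last exact: caratheodory_measurable_setI.
by rewrite -setC0; exact/caratheodory_measurable_setC/caratheodory_measurable_set0.
Qed.

Lemma caratheodory_bigsetU (I : eqType) (s : seq I) (H : I -> set T) :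
  (forall j, M (H j)) -> M (\big[setU/set0]_(j <- s) H j).
Proof.
move=> MH; elim/big_ind: _ => //; first exact: caratheodory_measurable_set0.
exact: caratheodory_measurable_setU.
Qed.

Lemma caratheodory_bigsetU_additive (I : choiceType) (s : seq I) (H : I -> set T) X :
  (forall j, M (H j)) -> (forall j k, j != k -> H j `&` H k = set0) -> uniq s ->
  mu (X `&` \big[setU/set0]_(j <- s) H j) = \sum_(j <- s) mu (X `&` H j).
Proof.
move=> MH dH; elim: s => [|a s IH]; first by rewrite !big_nil setI0 outer_measure0.
move=> /andP[aNs us]; rewrite !big_cons.
rewrite (disjoint_caratheodoryIU (MH a) (caratheodory_bigsetU s MH)); first by rewrite IH.
apply/eqP/seteqP; split => // x; rewrite -bigcup_seq => -[Hax [j js Hjx]].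
have aj : a != j by apply: contraNneq aNs => ->.
by rewrite -(dH _ _ aj).
Qed.

End caratheodory_finite.

(* Boxes of ['rV_0] have volume [1] (an empty product). *)
Lemma lebn_rV0 (R : realType) (A : set 'rV[R]_0) : lebn A = +oo%E.
Proof.
apply/ereal_inf_pinfty => _ [a [b [_ ->]]].
rewrite /box_vol; under eq_eseriesr do rewrite big_ord0.
apply/cvg_lim => //; rewrite (_ : (fun k => _) = (fun k => k%:R%:E)); first exact/cvgenyP.
by apply/funext => k /=; rewrite /series/= sumEFin big_const_nat iter_addr addr0 subn0.
Qed.

Definition axis_hcube (R : realType) n (p : 'rV[R]_n) (s : R) : set 'rV[R]_n :=
  [set x | forall i, p ord0 i <= x ord0 i < p ord0 i + s].

Section lebn_measurable_cubes.
Variables (R : realType) (n' : nat).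
Local Notation n := n'.+1.
Local Notation V := 'rV[R]_n.
Local Notation m := (@lebn R n).

Lemma lebn0 : m set0 = 0%E.
Proof.
apply/eqP; rewrite eq_le lebn_ge0 andbT.
apply: ereal_inf_lbound; exists (fun=> const_mx 1), (fun=> 0); split => //.
rewrite eseries0 // => k _ _; rewrite /box_vol big_ord_recl !mxE sub0r.
by rewrite (max_idPr (lerN10 R)) mul0r.
Qed.

HB.instance Definition _ := isOuterMeasure.Build R V m lebn0 (@lebn_ge0 R n)
  (@le_lebn R n) (@lebn_sigma_subadditive R n).

Local Open Scope ereal_scope.

Lemma lebnU2 (A B : set V) : m (A `|` B) <= m A + m B.
Proof. exact: outer_measureU2. Qed.

Lemma lebn_halfspace_split (i : 'I_n) (h : R) (X : set V) :
  m (X `&` [set x | x ord0 i <= h]%R) + m (X `&` [set x | h <= x ord0 i]%R) <= m X.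
Proof.
apply: le_ereal_inf_tmp => _ [a [b [Xab ->]]].
pose b1 k : V := \row_j (if j == i then Num.min (b k ord0 j) h else b k ord0 j).
pose a2 k : V := \row_j (if j == i then Num.max (a k ord0 j) h else a k ord0 j).
have volE k : box_vol (a k) (b k) = (box_vol (a k) (b1 k) + box_vol (a2 k) (b k))%R.
  have volD1 (c d : V) : box_vol c d = (Num.max (d ord0 i - c ord0 i) 0 *
      \prod_(j < n | j != i) Num.max (d ord0 j - c ord0 j) 0)%R.
    by rewrite /box_vol (bigD1 i).
  have eq_other (c d c' d' : V) :
      (forall j, j != i -> d' ord0 j - c' ord0 j = d ord0 j - c ord0 j)%R ->
      (\prod_(j < n | j != i) Num.max (d' ord0 j - c' ord0 j) 0 =
       \prod_(j < n | j != i) Num.max (d ord0 j - c ord0 j) 0)%R.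
    by move=> cd; apply: eq_bigr => j /cd ->.
  rewrite !volD1 !mxE eqxx -(maxr_subr_split _ _ h) mulrDl.
  by rewrite !(@eq_other (a k) (b k)) // => j ji; rewrite !mxE (negbTE ji).
rewrite (eq_eseriesr (fun k _ => congr1 EFin (volE k))).
under eq_eseriesr do rewrite EFinD.
rewrite nneseriesD; try by move=> *; rewrite lee_fin box_vol_ge0.
apply: leeD; apply: ereal_inf_lbound.
- exists a, b1; split => // x [/Xab [k _ xk] xh]; exists k => // j.
  rewrite mxE; case: eqP => [->|_]; last exact: xk.
  by move: (xk i) => /andP[h1 h2]; rewrite le_min h1 h2 xh.
- exists a2, b; split => // x [/Xab [k _ xk] xh]; exists k => // j.
  rewrite mxE; case: eqP => [->|_]; last exact: xk.
  by move: (xk i) => /andP[h1 h2]; rewrite ge_max h1 h2 xh.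
Qed.

Lemma caratheodory_coord_le (i : 'I_n) (h : R) :
  m.-caratheodory [set x : V | x ord0 i <= h]%R.
Proof.
apply: le_caratheodory_measurable => X.
apply: le_trans (lebn_halfspace_split i h X); apply: leeD2l; apply: le_lebn.
by move=> x [Xx /negP]; rewrite -ltNge => /ltW.
Qed.

Lemma caratheodory_coord_ge (i : 'I_n) (h : R) :
  m.-caratheodory [set x : V | h <= x ord0 i]%R.
Proof.
apply: le_caratheodory_measurable => X.
apply: le_trans (lebn_halfspace_split i h X); rewrite addeC; apply: leeD2r.
by apply: le_lebn => x [Xx /negP]; rewrite -ltNge => /ltW.
Qed.

Lemma caratheodory_axis_cube (p : V) (s : R) : m.-caratheodory (axis_cube p s).
Proof.
have -> : axis_cube p s = [set x | forall i, ([set x : V | p ord0 i <= x ord0 i] `&`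
    [set x | x ord0 i <= p ord0 i + s])%R x].
  by apply/seteqP; split => x /= H i; [move/andP: (H i)|case: (H i) => -> ->].
apply: caratheodory_forall => i.
apply: caratheodory_measurable_setI; first exact: caratheodory_coord_ge.
exact: caratheodory_coord_le.
Qed.

Lemma caratheodory_axis_hcube (p : V) (s : R) : m.-caratheodory (axis_hcube p s).
Proof.
have -> : axis_hcube p s = [set x | forall i, ([set x : V | p ord0 i <= x ord0 i] `&`
    ~` [set x | p ord0 i + s <= x ord0 i])%R x].
  apply/seteqP; split => x /= H i; last by case: (H i) => -> /negP; rewrite -ltNge.
  by move/andP: (H i) => [-> ?]; split => //; apply/negP; rewrite -ltNge.
apply: caratheodory_forall => i; apply: caratheodory_measurable_setI.
  exact: caratheodory_coord_ge.
exact/caratheodory_measurable_setC/caratheodory_coord_ge.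
Qed.

End lebn_measurable_cubes.

Section lebn_homothety.
Variables (R : realType) (n : nat).
Local Notation V := 'rV[R]_n.
Local Notation m := (@lebn R n).

Definition homothety (p : V) (t : R) (x : V) : V := p + t *: x.

Lemma box_vol_homothety (p a b : V) t : 0 <= t ->
  box_vol (homothety p t a) (homothety p t b) = t ^+ n * box_vol a b.
Proof.
move=> t0; have -> : t ^+ n = \prod_(i < n) t by rewrite prodr_const card_ord.
rewrite /box_vol -big_split /=.
apply: eq_bigr => i _; rewrite !mxE opprD addrACA subrr add0r -mulrBr.
by rewrite maxr_pMr // mulr0.
Qed.

Local Open Scope ereal_scope.

Lemma lebn_homothety_le (p : V) t A : (0 < t)%R ->
  m (homothety p t @` A) <= (t ^+ n)%:E * m A.
Proof.
move=> t0; have tn0 : (0 < t ^+ n)%R by rewrite exprn_gt0.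
rewrite -lee_pdivrMl //; apply: le_ereal_inf_tmp => _ [a [b [Aab ->]]].
rewrite lee_pdivrMl // -nneseriesZl; last by move=> *; rewrite lee_fin box_vol_ge0.
under eq_eseriesr do rewrite -EFinM -(box_vol_homothety p) ?(ltW t0) //.
apply: ereal_inf_lbound; exists (homothety p t \o a), (homothety p t \o b).
split => //= _ [x /Aab [k _ xk] <-]; exists k => // i.
by rewrite !mxE !lerD2l !ler_pM2l //; exact: xk.
Qed.

Lemma homothetyK (p : V) t : (t != 0)%R ->
  cancel (homothety p t) (homothety (- (t^-1 *: p)) t^-1).
Proof. by move=> t0 x; rewrite /homothety scalerDr scalerA mulVf // scale1r addKr. Qed.

Lemma lebn_homothety (p : V) t A : (0 < t)%R ->
  m (homothety p t @` A) = (t ^+ n)%:E * m A.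
Proof.
move=> t0; apply/eqP; rewrite eq_le lebn_homothety_le //=.
rewrite -lee_pdivlMl ?exprn_gt0 // -exprVn.
have := lebn_homothety_le (- (t^-1 *: p)) (homothety p t @` A) (_ : 0 < t^-1)%R.
rewrite image_comp (eq_imagel (fun x _ => homothetyK p (lt0r_neq0 t0) x)) image_id.
by apply; rewrite invr_gt0.
Qed.

Lemma axis_cube_homothety (p : V) s : (0 < s)%R ->
  axis_cube p s = homothety p s @` (@unit_cube R n).
Proof.
move=> s0; apply/seteqP; split => x.
  move=> Hx; exists (s^-1 *: (x - p)).
    move=> i; rewrite !mxE; move/andP: (Hx i) => [h1 h2].
    rewrite mulr_ge0 ?invr_ge0 ?subr_ge0 ?(ltW s0) //= mulrC ler_pdivrMr // mul1r.
    by rewrite lerBlDl.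
  by rewrite /homothety scalerA mulfV ?gt_eqF // scale1r addrC subrK.
move=> [y Hy <-] i; rewrite !mxE; move/andP: (Hy i) => [h1 h2].
have : (s * y ord0 i <= s)%R by rewrite -{2}(mulr1 s) ler_wpM2l // ltW.
have : (0 <= s * y ord0 i)%R by rewrite mulr_ge0 // ltW.
by move=> *; apply/andP; split; lra.
Qed.

Lemma lebn_axis_cube (p : V) s : (0 < s)%R ->
  m (axis_cube p s) = (s ^+ n)%:E * m (@unit_cube R n).
Proof. by move=> s0; rewrite axis_cube_homothety // lebn_homothety. Qed.

End lebn_homothety.

Lemma lebn_axis_hcube_ge (R : realType) n (p : 'rV[R]_n.+1) s c : (0 < s)%R ->
  lebn (@unit_cube R n.+1) = c%:E -> (0 <= c)%R ->
  ((s ^+ n.+1 * c)%:E <= lebn (axis_hcube p s))%E.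
Proof.
move=> s0 Qc c0; case Eh : (lebn (axis_hcube p s)) => [r| |]; last 2 first.
- by rewrite leey.
- by have := lebn_ge0 (axis_hcube p s); rewrite Eh.
rewrite lee_fin; apply: exprM_le_of_lt => // t /andP[t0 ts].
rewrite -lee_fin -Eh EFinM -Qc -(lebn_axis_cube p) //; apply: le_lebn => x Hx i.
by move/andP: (Hx i) => [-> h2]; rewrite (le_lt_trans h2) // ltrD2l.
Qed.

Section convex_geometry.
Variables (R : realType) (n : nat).
Local Notation V := 'rV[R]_n.

Lemma convex_set_comb (Lam : set V) (a b : V) (l : R) :
  convex.convex_set Lam -> Lam a -> Lam b -> 0 <= l <= 1 ->
  Lam (l *: a + (1 - l) *: b).
Proof.
move=> cLam La Lb /andP[l0 l1].
by have := cLam a b (Itv01 l0 l1); rewrite !inE => /(_ La Lb).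
Qed.

Lemma convex_axis_cube_comb (Lam : set V) (p1 p2 : V) s t :
  convex.convex_set Lam -> axis_cube p1 s `<=` Lam -> axis_cube p2 s `<=` Lam ->
  0 <= t <= 1 -> axis_cube ((1 - t) *: p1 + t *: p2) s `<=` Lam.
Proof.
move=> cLam C1 C2 /andP[t0 t1] w Hw; set q := (1 - t) *: p1 + t *: p2.
have Cw p : axis_cube p s `<=` Lam -> Lam (w - q + p).
  move=> Cp; apply: Cp => i; move/andP: (Hw i); rewrite /q !mxE => -[h1 h2].
  by apply/andP; split; lra.
have -> : w = (1 - t) *: (w - q + p1) + (1 - (1 - t)) *: (w - q + p2).
  by apply/rowP => i; rewrite /q !mxE; ring.
by apply: convex_set_comb; [|exact: Cw|exact: Cw|apply/andP; split; lra].
Qed.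

Definition cube_center : V := const_mx 2^-1.

(* The homothety of ratio [1 - d] about the centre of the unit cube. *)
Definition shrink (d : R) : V -> V := homothety (d *: cube_center) (1 - d).

Lemma convex_shrink_nbhs (Lam : set V) (d : R) (y w : V) :
  convex.convex_set Lam -> @unit_cube R n `<=` Lam -> 0 < d < 1 -> Lam y ->
  (forall i, `|w ord0 i - shrink d y ord0 i| <= d / 2) -> Lam w.
Proof.
move=> cLam QLam /andP[d0 d1] Ly Hw.
set q : V := cube_center + d^-1 *: (w - shrink d y).
have Qq : @unit_cube R n q.
  move=> i; move: (Hw i); rewrite /q !mxE => /ler_normlP[h1 h2].
  have dV : d * d^-1 = 1 by rewrite mulfV // gt_eqF.
  have dV0 : 0 < d^-1 by rewrite invr_gt0.
  set X := w ord0 i - _ in h1 h2 *.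
  have k1 : 0 <= d^-1 * (X + d / 2) by rewrite mulr_ge0 ?(ltW dV0) //; lra.
  have k2 : 0 <= d^-1 * (d / 2 - X) by rewrite mulr_ge0 ?(ltW dV0) //; lra.
  by apply/andP; split; nra.
have := convex_set_comb cLam Ly (QLam _ Qq) (_ : 0 <= 1 - d <= 1).
have -> : (1 - d) *: y + (1 - (1 - d)) *: q = w.
  by apply/rowP => i; rewrite /q /shrink /homothety !mxE; field; lra.
by apply; apply/andP; split; lra.
Qed.

End convex_geometry.

Section outer_measure_cells.
Variables (R : realType) (T : Type) (mu : {outer_measure set T -> \bar R}).
Local Open Scope ereal_scope.

Lemma ex_dense_cell (I : choiceType) (s : seq I) (H : I -> set T) (S : set T) (L : R) :
  (forall j, mu.-caratheodory (H j)) -> (forall j k, j != k -> H j `&` H k = set0) ->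
  uniq s -> (0 <= L)%R ->
  L%:E * mu (\big[setU/set0]_(j <- s) H j) < mu (S `&` \big[setU/set0]_(j <- s) H j) ->
  exists j, L%:E * mu (H j) < mu (S `&` H j).
Proof.
move=> MH dH us L0; apply: contraPP => /forallNP sparse.
apply/negP; rewrite -leNgt -[X in _ <= _ * mu X]setTI.
rewrite !caratheodory_bigsetU_additive //.
rewrite ge0_sume_distrr; last by move=> j _; exact: outer_measure_ge0.
by apply: lee_sum => j _; rewrite setTI leNgt; exact/negP/sparse.
Qed.

Lemma caratheodory_setI_le (G Lam S : set T) (t g : R) :
  mu.-caratheodory G -> G `<=` Lam -> mu Lam = t%:E -> mu G = g%:E ->
  mu (S `&` Lam) <= mu (S `&` G) + (t - g)%:E.
Proof.
move=> MG GLam mLam mG; have mLamG : mu (Lam `&` ~` G) = (t - g)%:E.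
  have := MG Lam; rewrite (setIidr GLam) mLam mG.
  case: (mu (Lam `&` ~` G)) (outer_measure_ge0 mu (Lam `&` ~` G)) => [y| |] // _.
  by rewrite -EFinD => -[->]; congr EFin; ring.
rewrite (MG (S `&` Lam)) -mLamG.
by apply: leeD; apply: le_outer_measure => x [[Sx Lx] Gx].
Qed.

End outer_measure_cells.

Section grid.
Variables (R : realType) (n : nat) (s : R) (M : nat).
Local Notation V := 'rV[R]_n.
Local Notation F := {ffun 'I_n -> 'I_(2 * M).+1}.

(* The grid of mesh [s] on [[-M s, (M + 1) s]^n], indexed by [0 <= j_i <= 2 M]. *)
Definition grid_corner (j : F) : V := \row_i (((j i)%:R - M%:R) * s).

Lemma grid_hcube_disjoint (j k : F) : 0 < s -> j != k ->
  axis_hcube (grid_corner j) s `&` axis_hcube (grid_corner k) s = set0.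
Proof.
move=> s0 jk; apply/seteqP; split => x // [Hj Hk].
have [i ji] : exists i, j i != k i.
  apply/existsP; apply: contraNT jk; rewrite negb_exists => /forallP jk.
  by apply/eqP/ffunP => i; apply/eqP; move: (jk i); rewrite negbK.
move/andP: (Hj i) (Hk i); rewrite !mxE => -[a1 a2] /andP[b1 b2].
have h1 : ((j i)%:R : R) < (k i)%:R + 1 by nra.
have h2 : ((k i)%:R : R) < (j i)%:R + 1 by nra.
rewrite !natr1 !ltr_nat !ltnS in h1 h2.
by move: ji; rewrite -val_eqE /= eqn_leq h1 h2.
Qed.

Lemma grid_hcube_cover (Bd : R) (x : V) : 0 < s -> Bd / s < M%:R ->
  (forall i, `|x ord0 i| <= Bd) -> exists j : F, axis_hcube (grid_corner j) s x.
Proof.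
move=> s0 BdM xB.
have arg i : 0 <= x ord0 i / s + M%:R < (2 * M)%:R.
  have : `|x ord0 i / s| <= Bd / s.
    by rewrite normrM (gtr0_norm (_ : 0 < s^-1)) ?invr_gt0 // ler_pM2r ?invr_gt0.
  by move=> /ler_normlP[k1 k2]; rewrite natrM; apply/andP; split; lra.
exists [ffun i => inord (Num.truncn (x ord0 i / s + M%:R))] => i.
have /andP[a0 a1] := arg i.
rewrite !mxE ffunE inordK; last by rewrite ltnS ltnW // truncn_lt_nat.
have /andP[t1 t2] := truncn_itv a0; rewrite -natr1 in t2.
have xs : x ord0 i / s * s = x ord0 i by rewrite divfK // gt_eqF.
by apply/andP; split; nra.
Qed.

End grid.

Section inner_grid.
Variables (R : realType) (n : nat) (Lam : set 'rV[R]_n) (s : R) (M : nat).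
Local Notation F := {ffun 'I_n -> 'I_(2 * M).+1}.

Definition inner_cell (j : F) : set 'rV[R]_n :=
  if `[< axis_cube (grid_corner s j) s `<=` Lam >] then axis_hcube (grid_corner s j) s
  else set0.

Definition inner_grid := \big[setU/set0]_(j <- enum F) inner_cell j.

Lemma inner_grid_sub : inner_grid `<=` Lam.
Proof.
rewrite /inner_grid -bigcup_seq => x [j _]; rewrite /inner_cell.
by case: asboolP => // jLam Hx; apply: jLam => i; move/andP: (Hx i) => [-> /ltW].
Qed.

Lemma inner_cell_disjoint (j k : F) : 0 < s -> j != k ->
  inner_cell j `&` inner_cell k = set0.
Proof.
move=> s0 jk; rewrite /inner_cell; case: asboolP => _; last by rewrite set0I.
by case: asboolP => _; [exact: grid_hcube_disjoint | rewrite setI0].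
Qed.

Lemma shrink_sub_inner_grid (Bd : R) :
  convex.convex_set Lam -> @unit_cube R n `<=` Lam -> 0 < s -> 2 * s < 1 ->
  (forall x, Lam x -> forall i, `|x ord0 i| <= Bd) -> Bd / s < M%:R ->
  shrink (2 * s) @` Lam `<=` inner_grid.
Proof.
move=> cLam QLam s0 s1 LamBd BdM _ [y Ly <-].
have d01 : 0 < 2 * s < 1 by apply/andP; split; lra.
have near_Lam (w : 'rV[R]_n) :
    (forall i, `|w ord0 i - shrink (2 * s) y ord0 i| <= s) -> Lam w.
  move=> ws; apply: convex_shrink_nbhs cLam QLam d01 Ly _ => i.
  have -> : 2 * s / 2 = s by rewrite [2 * s]mulrC mulfK ?pnatr_eq0.
  exact: ws.
have /LamBd/(grid_hcube_cover s0 BdM) [j jx] : Lam (shrink (2 * s) y).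
  by apply: near_Lam => i; rewrite subrr normr0 ltW.
rewrite /inner_grid -bigcup_seq; exists j; first by rewrite /= mem_enum.
rewrite /inner_cell asboolT // => w wj; apply: near_Lam => i.
move: (wj i) (jx i); rewrite mxE => /andP[w1 w2] /andP[x1 x2].
by apply/ler_normlP; split; lra.
Qed.

End inner_grid.

Lemma caratheodory_inner_cell (R : realType) n (Lam : set 'rV[R]_n.+1) s M j :
  (@lebn R n.+1).-caratheodory (@inner_cell R n.+1 Lam s M j).
Proof.
rewrite /inner_cell; case: asboolP => _; first exact: caratheodory_axis_hcube.
exact: caratheodory_measurable_set0.
Qed.

Section dense_cube.
Variables (R : realType) (n' : nat).
Local Notation n := n'.+1.
Local Notation V := 'rV[R]_n.
Local Notation m := (@lebn R n).
Local Notation Q := (@unit_cube R n).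

Lemma ex_inner_grid_large (Lam : set V) (K T s : R) :
  convex.convex_set Lam -> Q `<=` Lam -> Lam `<=` @dilate_unit_cube R n K ->
  m Lam = T%:E -> 0 <= T -> 0 < s -> 2 * s < 1 ->
  exists M, (((1 - n%:R * (2 * s)) * T)%:E <= m (inner_grid Lam s M))%E.
Proof.
move=> cLam QLam LamK mLam T0 s0 s1; set Bd := 2^-1 + `|K| / 2.
have LamBd x : Lam x -> forall i, `|x ord0 i| <= Bd.
  move=> /LamK xK i; move/andP: (xK i) => [h1 h2].
  by have := ler_norm K; rewrite /Bd => hK; apply/ler_normlP; split; lra.
exists (Num.truncn (Bd / s)).+1.
have /(shrink_sub_inner_grid cLam QLam s0 s1 LamBd)/le_lebn :
  Bd / s < (Num.truncn (Bd / s)).+1%:R by exact: truncnS_gt.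
apply: le_trans; rewrite /shrink lebn_homothety ?subr_gt0 // mLam -EFinM lee_fin.
by rewrite ler_wpM2r // bernoulli_ineq //; apply/andP; split; lra.
Qed.

Local Open Scope ereal_scope.

Lemma ex_dense_axis_cube (Lam S : set V) (K c T beta eps : R) :
  convex.convex_set Lam -> Q `<=` Lam -> Lam `<=` @dilate_unit_cube R n K ->
  m Q = c%:E -> (0 <= c)%R -> m Lam = T%:E -> (0 < T)%R ->
  m (S `&` Lam) = (beta * T)%:E -> (0 < eps < beta)%R -> (beta < 1)%R ->
  let s := (eps / (4 * n%:R))%R in
  exists p : V, axis_cube p s `<=` Lam /\
    (((beta - eps) / (1 - eps) * (s ^+ n * c))%:E <= m (S `&` axis_cube p s)).
Proof.
move=> cLam QLam LamK mQ c0 mLam T0 mSLam epsb b1 s; have /andP[e0 eb] := epsb.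
have s0 : (0 < s)%R by rewrite divr_gt0 // mulr_gt0 ?ltr0n.
have ns : (n%:R * (2 * s) = eps / 2)%R.
  by rewrite /s; field; rewrite nat1r pnatr_eq0.
have s1 : (2 * s < 1)%R.
  have : (2 * s <= n%:R * (2 * s))%R by rewrite ler_peMl ?ler1n // ltW // mulr_gt0.
  by rewrite ns; lra.
have [M] := ex_inner_grid_large cLam QLam LamK mLam (ltW T0) s0 s1.
rewrite ns; set G := inner_grid Lam s M => mG.
have GLam : G `<=` Lam by exact: inner_grid_sub.
have cellM := @caratheodory_inner_cell R n' Lam s M.
have Gc : m.-caratheodory G := caratheodory_bigsetU _ cellM.
have mGg : m G = (fine (m G))%:E by apply: (lebn_fineK (y := T)); rewrite -mLam le_lebn.
have mSG : m (S `&` G) = (fine (m (S `&` G)))%:E.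
  by apply: (lebn_fineK (y := fine (m G))); rewrite -mGg le_lebn // => x [].
have : m (S `&` Lam) <= m (S `&` G) + (T - fine (m G))%:E.
  exact: (@caratheodory_setI_le R V _ G Lam S T (fine (m G)) Gc GLam mLam mGg).
rewrite mSLam mSG -EFinD lee_fin.
have gT : ((1 - eps / 2) * T <= fine (m G))%R by rewrite -lee_fin -mGg.
move/(density_gain epsb b1 T0 gT).
rewrite -lte_fin EFinM -mSG -mGg => dense.
have L0 : (0 <= (beta - eps) / (1 - eps))%R by rewrite divr_ge0 //; lra.
have [j] := ex_dense_cell cellM (fun j k => @inner_cell_disjoint R n Lam s M j k s0)
  (enum_uniq _) L0 dense.
rewrite /inner_cell; case: asboolP => [jLam jd|_].
  2: by rewrite setI0 !outer_measure0 mule0 ltxx.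
exists (grid_corner s j); split => //.
have hcube_sub :
    S `&` axis_hcube (grid_corner s j) s `<=` S `&` axis_cube (grid_corner s j) s.
  by move=> x [Sx Hx]; split => // i; move/andP: (Hx i) => [-> /ltW].
apply: le_trans (le_trans (ltW jd) (le_lebn hcube_sub)).
by rewrite EFinM lee_wpmul2l ?lee_fin // lebn_axis_hcube_ge.
Qed.

End dense_cube.

Section slide_cube.
Variables (R : realType) (n' : nat).
Local Notation n := n'.+1.
Local Notation V := 'rV[R]_n.
Local Notation m := (@lebn R n).
Local Notation Q := (@unit_cube R n).
Local Open Scope ereal_scope.

Lemma lebn_shift_axis_cube (E : set V) (a b : V) (s h c : R) :
  (0 < s)%R -> (0 <= h)%R -> (2 * h <= 1)%R -> m Q = c%:E -> (0 <= c)%R ->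
  (forall i, `|a ord0 i - b ord0 i| <= h)%R ->
  m (E `&` axis_cube a s) <=
    m (E `&` axis_cube b s) + (n%:R * (2 * h) * (s + 1) ^+ n * c)%:E.
Proof.
move=> s0 h0 h1 mQ c0 ab; set D := axis_cube (b - h *: (const_mx 1%R : V)) (s + 2 * h)%R.
have bD : axis_cube b s `<=` D.
  move=> x xb i; move/andP: (xb i) => [x1 x2]; rewrite !mxE mulr1.
  by apply/andP; split; lra.
have aD : axis_cube a s `<=` D.
  move=> x xa i; move/andP: (xa i) => [x1 x2]; rewrite !mxE mulr1.
  by move/ler_normlP: (ab i) => [h3 h4]; apply/andP; split; lra.
have := caratheodory_axis_cube b s D; rewrite (setIidr bD) !lebn_axis_cube ?mQ //; last lra.
case Ey : (m (D `&` ~` axis_cube b s)) (lebn_ge0 (D `&` ~` axis_cube b s)) => [y| |] // Y0.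
rewrite -!EFinM -EFinD => -[Dy].
apply: (@le_trans _ _ (m ((E `&` axis_cube b s) `|` (D `&` ~` axis_cube b s)))).
  apply: le_lebn => x [Ex xa]; have [xb|xb] := pselect (axis_cube b s x); first by left.
  by right; split => //; exact: aD.
apply: le_trans (lebnU2 _ _) _; rewrite leeD2l // Ey lee_fin.
apply: le_trans (ler_wpM2r c0 (exprD_subr_le n (ltW s0) _)).
  by rewrite mulrBl; lra.
by apply/andP; split; lra.
Qed.

Definition seg_point (p1 p2 : V) (N k : nat) : V :=
  ((1 - k%:R / N%:R) *: p1 + (k%:R / N%:R) *: p2)%R.

Lemma lebn_seg_point_step (E : set V) (p1 p2 : V) (s c : R) (N k : nat) :
  (0 < s)%R -> m Q = c%:E -> (0 <= c)%R -> (0 < N)%N ->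
  (2 * \sum_(i < n) `|p1 ord0 i - p2 ord0 i| <= N%:R)%R ->
  m (E `&` axis_cube (seg_point p1 p2 N k) s) <=
    m (E `&` axis_cube (seg_point p1 p2 N k.+1) s) +
    (2 * n%:R * (s + 1) ^+ n * c * (\sum_(i < n) `|p1 ord0 i - p2 ord0 i|) / N%:R)%:E.
Proof.
move=> s0 mQ c0 N0 DmN; set Dm := (\sum_(i < n) _)%R in DmN *.
have N0' : (0 < N%:R :> R)%R by rewrite ltr0n.
have h0 : (0 <= Dm / N%:R)%R by rewrite divr_ge0 ?sumr_ge0 // ltW.
have h1 : (2 * (Dm / N%:R) <= 1)%R by rewrite mulrA ler_pdivrMr // mul1r.
have step i : (`|seg_point p1 p2 N k ord0 i - seg_point p1 p2 N k.+1 ord0 i| <= Dm / N%:R)%R.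
  have -> : (seg_point p1 p2 N k ord0 i - seg_point p1 p2 N k.+1 ord0 i =
      (p1 ord0 i - p2 ord0 i) / N%:R)%R.
    by rewrite !mxE -natr1; field; rewrite gt_eqF.
  rewrite normrM (gtr0_norm (_ : 0 < N%:R^-1)%R) ?invr_gt0 // ler_pM2r ?invr_gt0 //.
  by rewrite /Dm (bigD1 i) //= lerDl sumr_ge0.
have := lebn_shift_axis_cube E s0 h0 h1 mQ c0 step.
rewrite (_ : _ * c = 2 * n%:R * (s + 1) ^+ n * c * Dm / N%:R)%R //.
by field; rewrite gt_eqF.
Qed.

Lemma ex_axis_cube_between (Lam E : set V) (p1 p2 : V) (s c lo hi : R) :
  convex.convex_set Lam -> m Q = c%:E -> (0 <= c)%R -> (0 < s)%R ->
  axis_cube p1 s `<=` Lam -> axis_cube p2 s `<=` Lam -> (lo < hi)%R ->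
  lo%:E <= m (E `&` axis_cube p1 s) -> m (E `&` axis_cube p2 s) <= hi%:E ->
  exists p, axis_cube p s `<=` Lam /\ lo%:E <= m (E `&` axis_cube p s) <= hi%:E.
Proof.
move=> cLam mQ c0 s0 C1 C2 lohi lo1 hi2.
have fin p : m (E `&` axis_cube p s) = (fine (m (E `&` axis_cube p s)))%:E.
  by apply: (lebn_fineK (y := s ^+ n * c)); rewrite EFinM -mQ -(lebn_axis_cube p) // le_lebn.
set Dm := (\sum_(i < n) `|p1 ord0 i - p2 ord0 i|)%R.
set A := (2 * n%:R * (s + 1) ^+ n * c)%R.
have Dm0 : (0 <= Dm)%R by rewrite sumr_ge0.
have A0 : (0 <= A)%R by rewrite !mulr_ge0 // exprn_ge0 //; lra.
have ADm : (0 <= A * Dm / (hi - lo))%R.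
  by rewrite divr_ge0 ?(mulr_ge0 A0 Dm0) // subr_ge0 ltW.
(* [N] steps, each short enough to move the mass by at most [hi - lo]. *)
set N := (Num.truncn (A * Dm / (hi - lo) + 2 * Dm)).+1.
have := truncnS_gt (A * Dm / (hi - lo) + 2 * Dm); rewrite -/N => NP.
have N0 : (0 < N%:R :> R)%R by rewrite ltr0n.
have DmN : (2 * Dm <= N%:R)%R by lra.
pose f k := fine (m (E `&` axis_cube (seg_point p1 p2 N k) s)).
have step k : (k < N)%N -> (f k - f k.+1 <= hi - lo)%R.
  move=> _; have := @lebn_seg_point_step E p1 p2 s c N k s0 mQ c0 (ltn0Sn _) DmN.
  rewrite (fin (seg_point _ _ _ k)) (fin (seg_point _ _ _ k.+1)) -EFinD lee_fin.
  rewrite -/(f k) -/(f k.+1) -/Dm -/A.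
  have : (A * Dm / N%:R <= hi - lo)%R.
    by rewrite ler_pdivrMr // [((hi - lo) * _)%R]mulrC -ler_pdivrMr ?subr_gt0 //; lra.
  lra.
have [||k kN /andP[k1 k2]] := @discrete_intermediate_value _ f N lo hi _ _ (ltW lohi) step.
- by rewrite -lee_fin /f /seg_point mul0r subr0 scale1r scale0r addr0 -fin.
- by rewrite -lee_fin /f /seg_point divff ?gt_eqF // subrr scale0r scale1r add0r -fin.
exists (seg_point p1 p2 N k); rewrite fin !lee_fin k1 k2; split => //.
have kN1 : (k%:R / N%:R <= 1 :> R)%R by rewrite ler_pdivrMr // mul1r ler_nat.
by apply: convex_axis_cube_comb => //; rewrite kN1 andbT divr_ge0 // ltW.
Qed.

End slide_cube.

Section avg_char.
Variables (R : realType) (n : nat).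
Local Notation V := 'rV[R]_n.
Local Notation m := (@lebn R n).
Local Open Scope ereal_scope.

(* [avg_char] divides by [fine (m S)], which is [0] when [m S = +oo]; so a nonzero
   average forces [S] to have finite positive measure. *)
Lemma avg_char_lebnE (E S : set V) (alpha : R) :
  avg_char E S = alpha -> (alpha != 0)%R ->
  exists2 T, (0 < T)%R & m S = T%:E /\ m (E `&` S) = (alpha * T)%:E.
Proof.
move=> avgE alpha0; set T := fine (m S).
have T0 : (T != 0)%R.
  by apply: contraNneq alpha0 => T0; rewrite -avgE /avg_char -/T T0 invr0 mulr0.
have mS : m S = T%:E.
  by move: T0 (lebn_ge0 S); rewrite /T; case: (m S) => [r| |] //=; rewrite eqxx.
exists T; first by rewrite lt_neqAle eq_sym T0 -lee_fin -mS lebn_ge0.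
have mES : m (E `&` S) = (fine (m (E `&` S)))%:E.
  by apply: (lebn_fineK (y := T)); rewrite -mS le_lebn // => x [].
by split=> //; rewrite mES; congr EFin; rewrite -avgE /avg_char -/T divfK.
Qed.

Lemma avg_char_bounds (E S : set V) (v lo hi : R) : m S = v%:E -> (0 < v)%R ->
  (lo * v)%:E <= m (E `&` S) -> m (E `&` S) <= (hi * v)%:E ->
  (lo <= avg_char E S <= hi)%R.
Proof.
move=> mS v0 loE Ehi; have ES : m (E `&` S) = (fine (m (E `&` S)))%:E.
  by apply: (lebn_fineK (y := (hi * v)%R)).
rewrite ES !lee_fin in loE Ehi.
by rewrite /avg_char mS /= ler_pdivlMr // ler_pdivrMr // loE Ehi.
Qed.

Lemma lebn_setCI (E S : set V) (T x : R) : lebn_measurable E ->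
  m S = T%:E -> m (E `&` S) = x%:E -> m (~` E `&` S) = (T - x)%:E.
Proof.
move=> mE mS mES; have YT : m (~` E `&` S) <= T%:E by rewrite -mS le_lebn // => y [].
have := mE S; rewrite mS setIC mES setDE setIC (lebn_fineK YT).
by rewrite -EFinD => -[->]; congr EFin; ring.
Qed.

End avg_char.

Lemma lebn_unit_cube_gt0 (R : realType) n (Lam : set 'rV[R]_n.+1) (K T : R) :
  @unit_cube R n.+1 `<=` Lam -> Lam `<=` @dilate_unit_cube R n.+1 K ->
  lebn Lam = T%:E -> 0 < T -> 0 < K ->
  0 < fine (lebn (@unit_cube R n.+1)) /\
  lebn (@unit_cube R n.+1) = (fine (lebn (@unit_cube R n.+1)))%:E.
Proof.
move=> QLam LamK mLam T0 K0; set c := fine _.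
have mQ : lebn (@unit_cube R n.+1) = c%:E.
  by apply: (lebn_fineK (y := T)); rewrite -mLam le_lebn.
split => //; rewrite lt_neqAle fine_ge0 ?lebn_ge0 // andbT; apply/negP => /eqP c0.
have LamC : Lam `<=` axis_cube (const_mx (2^-1 - K / 2)) K.
  by move=> x /LamK xK i; rewrite mxE; move/andP: (xK i) => [h1 h2]; apply/andP; split; lra.
have := le_lebn LamC; rewrite lebn_axis_cube // mQ -c0 mule0 mLam lee_fin; lra.
Qed.

Section avg_between.
Variables (R : realType) (n' : nat).
Local Notation n := n'.+1.
Local Notation V := 'rV[R]_n.
Local Notation m := (@lebn R n).

Lemma ex_axis_cube_avg_between (Lam E : set V) (K c T alpha eps : R) :
  convex.convex_set Lam -> @unit_cube R n `<=` Lam -> Lam `<=` @dilate_unit_cube R n K ->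
  lebn_measurable E -> m (@unit_cube R n) = c%:E -> 0 < c ->
  m Lam = T%:E -> 0 < T -> m (E `&` Lam) = (alpha * T)%:E ->
  0 < eps < alpha -> eps < 1 - alpha ->
  let s := eps / (4 * n%:R) in
  exists p : V, axis_cube p s `<=` Lam /\
    (alpha - eps) / (1 - eps) <= avg_char E (axis_cube p s) <= alpha / (1 - eps).
Proof.
move=> cLam QLam LamK mE mQ c0 mLam T0 mELam epsa epsa' s.
have /andP[e0 ea] := epsa; have e1 : 0 < 1 - eps by lra.
set v := s ^+ n * c.
have s0 : 0 < s by rewrite divr_gt0 // mulr_gt0 ?ltr0n.
have v0 : 0 < v by rewrite mulr_gt0 // exprn_gt0.
have mC (p : V) : m (axis_cube p s) = v%:E by rewrite lebn_axis_cube // mQ -EFinM.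
have [p1 [C1 dense1]] := ex_dense_axis_cube cLam QLam LamK mQ (ltW c0) mLam T0 mELam
  epsa (ltac:(lra)).
have mCLam : m (~` E `&` Lam) = ((1 - alpha) * T)%:E.
  by rewrite (lebn_setCI mE mLam mELam) mulrBl mul1r.
have epsa2 : 0 < eps < 1 - alpha by rewrite e0 epsa'.
have [p2 [C2 dense2]] := ex_dense_axis_cube cLam QLam LamK mQ (ltW c0) mLam T0 mCLam
  epsa2 (ltac:(lra)).
rewrite -/s -/v in C1 dense1 C2 dense2.
have sparse2 : (m (E `&` axis_cube p2 s) <= (alpha / (1 - eps) * v)%:E)%E.
  have mEC : m (E `&` axis_cube p2 s) = (fine (m (E `&` axis_cube p2 s)))%:E.
    by apply: (lebn_fineK (y := v)); rewrite -(mC p2) le_lebn // => x [].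
  move: dense2; rewrite (lebn_setCI mE (mC p2) mEC) mEC !lee_fin.
  have -> : alpha / (1 - eps) = 1 - (1 - alpha - eps) / (1 - eps).
    by field; rewrite lt0r_neq0.
  by set L := (_ / (1 - eps)); rewrite mulrBl mul1r; lra.
have lohi : (alpha - eps) / (1 - eps) * v < alpha / (1 - eps) * v.
  by rewrite ltr_pM2r // ltr_pM2r ?invr_gt0 //; lra.
have [p [Cp /andP[lo hi]]] :=
  ex_axis_cube_between cLam mQ (ltW c0) s0 C1 C2 lohi dense1 sparse2.
by exists p; split => //; exact: avg_char_bounds (mC p) v0 lo hi.
Qed.

End avg_between.

Theorem lemma3 (R : realType) (n : nat) :
  exists a_n A_n : R, 0 < a_n /\ a_n <= A_n /\
  forall (alpha eps : R) (Lam E : set 'rV[R]_n),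
    0 < alpha < 1 ->
    0 < eps -> eps < Num.min alpha (1 - alpha) ->
    convex.convex_set Lam ->
    @unit_cube R n `<=` Lam ->
    Lam `<=` @dilate_unit_cube R n (n%:R `^ (3 / 2)) ->
    lebn_measurable E ->
    (lebn E < +oo)%E ->
    avg_char E Lam = alpha ->
    exists (p : 'rV[R]_n) (s : R),
      0 < s /\
      axis_cube p s `<=` Lam /\
      ((a_n * eps ^+ n)%:E <= lebn (axis_cube p s))%E /\
      (lebn (axis_cube p s) <= (A_n * eps ^+ n)%:E)%E /\
      (alpha - eps) / (1 - eps) <= avg_char E (axis_cube p s) /\
      avg_char E (axis_cube p s) <= alpha / (1 - eps).
Proof.
case: n => [|n].
  by exists 1, 1; do 2!split => //; move=> alpha eps Lam E _ _ _ _ _ _ _; rewrite lebn_rV0.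
set c := fine (lebn (@unit_cube R n.+1)); set k := (4 * n.+1%:R) ^+ n.+1 : R.
have k0 : 0 < k by rewrite exprn_gt0 // mulr_gt0 ?ltr0n.
(* [0 < c] only follows from the hypotheses, which cannot hold when [c = 0]. *)
set a := if 0 < c then c / k else 1.
have a0 : 0 < a by rewrite /a; case: ifP => // c0; rewrite divr_gt0.
exists a, a; do 2!split => //.
move=> alpha eps Lam E /andP[al0 al1] e0 emin cLam QLam LamK mE _ avgE.
move: emin; rewrite lt_min => /andP[ea ea'].
have [T T0 [mLam mELam]] := avg_char_lebnE avgE (lt0r_neq0 al0).
have [c0 mQ] := lebn_unit_cube_gt0 QLam LamK mLam T0 (powR_gt0 _ (ltr0Sn _ _)).
rewrite -/c in c0 mQ; have -> : a = c / k by rewrite /a c0.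
have [|p [Cp /andP[avg1 avg2]]] :=
  ex_axis_cube_avg_between cLam QLam LamK mE mQ c0 mLam T0 mELam _ ea'.
  by rewrite e0 ea.
set s := eps / _ in Cp avg1 avg2.
have s0 : 0 < s by rewrite divr_gt0 // mulr_gt0 ?ltr0n.
have mC : lebn (axis_cube p s) = (c / k * eps ^+ n.+1)%:E.
  by rewrite lebn_axis_cube // mQ -EFinM /s expr_div_n /k; congr EFin; field; rewrite gt_eqF.
by exists p, s; rewrite mC; do 5!split => //.
Qed.
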